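(* Fix a threshold $R\in(0,1)$ and a receiver type $i\in[-1/2,1/2]$. Then: (i) the receiver of type $i$ accepts the buy recommendation if and only if he accepts the don't-buy recommendation; (ii) the receiver of type $i$ accepts the recommendation (equivalently, by (i), the buy recommendation) if and only if $\Delta_O^B\ge i\,\Delta_S^B$.
   Context: Setting. Consumer types are $i\in[-1/2,1/2]$, distributed according to a continuous cumulative distribution function $F$ with full support on $[-1/2,1/2]$. A product has a quality vector $(Q_1,Q_2)\in\{0,1\}^2$; a type-$i$ consumer gets payoff $(1/2+i)Q_1+(1/2-i)Q_2$ from it. The versions $(1,1),(1,0),(0,1),(0,0)$ have prior probabilities $q_H,q_1,q_2,q_L$ respectively, all strictly positive and summing to $1$. One product carries a recommendation from a sender whose type is drawn from $F$ independently of the product; given a threshold $R\in(0,1)$, the sender gives a buy recommendation $B$ if her payoff from the product is at least $R$ and a don't-buy recommendation $D$ otherwise. Let $\phi_1(R)=1-F(R-1/2)$, $\phi_2(R)=F(1/2-R)$, $\pi^B=q_H+q_1\phi_1(R)+q_2\phi_2(R)$ and $\pi^D=1-\pi^B$. The receiver's Bayesian posteriors over $(1,1),(1,0),(0,1),(0,0)$ are $p^B_H=q_H/\pi^B$, $p^B_1=q_1\phi_1(R)/\pi^B$, $p^B_2=q_2\phi_2(R)/\pi^B$, $p^B_L=0$ after $B$, and $p^D_H=0$, $p^D_1=q_1(1-\phi_1(R))/\pi^D$, $p^D_2=q_2(1-\phi_2(R))/\pi^D$, $p^D_L=q_L/\pi^D$ after $D$. For $r\in\{B,D\}$ let $U_i^r=p_H^r+(1/2+i)p_1^r+(1/2-i)p_2^r$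 (expected payoff of type $i$ from the recommended product) and $U_i^0=q_H+(1/2+i)q_1+(1/2-i)q_2$ (expected payoff from an alternative product without a recommendation). A receiver of type $i$ accepts the buy recommendation if $U_i^B\ge U_i^0$, and accepts the don't-buy recommendation if $U_i^0\ge U_i^D$. The objective and subjective effects of a recommendation $r\in\{B,D\}$ are $\Delta_O^r=p_H^r-q_H+\frac{p_1^r-q_1}{2}+\frac{p_2^r-q_2}{2}$ and $\Delta_S^r=(p_2^r-q_2)-(p_1^r-q_1)$. *)

From Stdlib Require Import Reals.
Open Scope R_scope.

Definition type_cdf (F : R -> R) : Prop :=
  continuity F /\
  (forall x y, x <= y -> F x <= F y) /\
  (forall x, x <= -1/2 -> F x = 0) /\
  (forall x, 1/2 <= x -> F x = 1) /\
  (forall x y, -1/2 <= x -> x < y -> y <= 1/2 -> F x < F y).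

(* Prior over versions (1,1),(1,0),(0,1),(0,0). *)
Definition valid_prior (qH q1 q2 qL : R) : Prop :=
  0 < qH /\ 0 < q1 /\ 0 < q2 /\ 0 < qL /\ qH + q1 + q2 + qL = 1.

Section Model.
Variables (F : R -> R) (qH q1 q2 qL : R) (Rt : R).

Definition phi1 : R := 1 - F (Rt - 1/2).
Definition phi2 : R := F (1/2 - Rt).
Definition piB : R := qH + q1 * phi1 + q2 * phi2.
Definition piD : R := 1 - piB.

Definition pBH : R := qH / piB.
Definition pB1 : R := q1 * phi1 / piB.
Definition pB2 : R := q2 * phi2 / piB.
Definition pBL : R := 0.
Definition pDH : R := 0.
Definition pD1 : R := q1 * (1 - phi1) / piD.
Definition pD2 : R := q2 * (1 - phi2) / piD.
Definition pDL : R := qL / piD.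

Definition UB (i : R) : R := pBH + (1/2 + i) * pB1 + (1/2 - i) * pB2.
Definition UD (i : R) : R := pDH + (1/2 + i) * pD1 + (1/2 - i) * pD2.
Definition U0 (i : R) : R := qH + (1/2 + i) * q1 + (1/2 - i) * q2.

Definition accepts_B (i : R) : Prop := U0 i <= UB i.
Definition accepts_D (i : R) : Prop := UD i <= U0 i.

Definition DeltaO_B : R := pBH - qH + (pB1 - q1) / 2 + (pB2 - q2) / 2.
Definition DeltaS_B : R := (pB2 - q2) - (pB1 - q1).
Definition DeltaO_D : R := pDH - qH + (pD1 - q1) / 2 + (pD2 - q2) / 2.
Definition DeltaS_D : R := (pD2 - q2) - (pD1 - q1).
End Model.

(* The prior is the average of the two posteriors weighted by the recommendation
   probabilities, so the same holds for the expected payoff of any type: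
   U0 = piB * UB + piD * UD with 0 < piB < 1.  Hence U0 lies between UB and UD,
   and U0 <= UB exactly when UD <= U0.  Moreover UB - U0 is linear in the type,
   and collecting the coefficients gives DeltaO_B - i * DeltaS_B. *)

From Stdlib Require Import Reals Lra.
Open Scope R_scope.

Lemma le_convex_combination (p x y z : R) :
  0 < p < 1 -> z = p * x + (1 - p) * y -> (z <= x <-> y <= z).
Proof. intros Hp ->; split; intro H; nra. Qed.

Lemma type_cdf_bounds (F : R -> R) (x : R) : type_cdf F -> 0 <= F x <= 1.
Proof.
  intros (_ & Fmono & Fleft & Fright & _); split.
  - rewrite <- (Fleft (Rmin x (-1/2))) by apply Rmin_r.
    apply Fmono, Rmin_l.
  - rewrite <- (Fright (Rmax x (1/2))) by apply Rmax_r.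
    apply Fmono, Rmax_l.
Qed.

Section Recommendation.
Variables (F : R -> R) (qH q1 q2 Rt : R).

Lemma piB_bounds (qL : R) :
  type_cdf F -> valid_prior qH q1 q2 qL -> 0 < piB F qH q1 q2 Rt < 1.
Proof.
  intros HF (HqH & Hq1 & Hq2 & HqL & Hsum).
  assert (Hphi1 : 0 <= phi1 F Rt <= 1).
  { unfold phi1; pose proof (type_cdf_bounds F (Rt - 1/2) HF); lra. }
  assert (Hphi2 : 0 <= phi2 F Rt <= 1) by exact (type_cdf_bounds F _ HF).
  unfold piB; split; nra.
Qed.

Lemma U0_total_expectation (i : R) :
  piB F qH q1 q2 Rt <> 0 -> piD F qH q1 q2 Rt <> 0 ->
  U0 qH q1 q2 i =
    piB F qH q1 q2 Rt * UB F qH q1 q2 Rt i + piD F qH q1 q2 Rt * UD F qH q1 q2 Rt i.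
Proof.
  intros HB HD.
  unfold U0, UB, UD, pBH, pB1, pB2, pDH, pD1, pD2.
  unfold piD in *; unfold piB in *.
  field; split; assumption.
Qed.

Lemma UB_sub_U0 (i : R) :
  UB F qH q1 q2 Rt i - U0 qH q1 q2 i =
    DeltaO_B F qH q1 q2 Rt - i * DeltaS_B F qH q1 q2 Rt.
Proof. unfold UB, U0, DeltaO_B, DeltaS_B. field. Qed.

End Recommendation.

Theorem proposition1 (F : R -> R) (qH q1 q2 qL Rt i : R) :
  type_cdf F ->
  valid_prior qH q1 q2 qL ->
  0 < Rt < 1 ->
  -1/2 <= i <= 1/2 ->
  (accepts_B F qH q1 q2 Rt i <-> accepts_D F qH q1 q2 Rt i) /\
  (accepts_B F qH q1 q2 Rt i <->
     i * DeltaS_B F qH q1 q2 Rt <= DeltaO_B F qH q1 q2 Rt).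
Proof.
  intros HF Hq _ _.
  pose proof (piB_bounds F qH q1 q2 Rt qL HF Hq) as HpiB.
  assert (Hsplit := U0_total_expectation F qH q1 q2 Rt i).
  unfold piD in Hsplit.
  pose proof (UB_sub_U0 F qH q1 q2 Rt i) as Hdiff.
  unfold accepts_B, accepts_D; split.
  - apply le_convex_combination with (piB F qH q1 q2 Rt); [exact HpiB |].
    apply Hsplit; lra.
  - lra.
Qed.
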